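(* Let $E$ be a Hermite–Biehler entire function with no real zeros whose phase function satisfies $\varphi'\in L^\infty(\mathbb{R})$, and let $0<p<\infty$. Suppose there exists $C>0$ such that $\lVert f/E\rVert_\infty\le C\lVert f/E\rVert_p$ for all real entire functions $f\in\mathcal{H}^p(E)$. Then $C(p,E)\le C$.
   Context: An entire function $E$ is Hermite–Biehler if $\lvert E(\overline{z})\rvert < \lvert E(z)\rvert$ for $z$ in the upper half-plane $\mathbb{C}_+$. For an entire $g$, $g^{\#}(z)=\overline{g(\overline z)}$; $g$ is real entire if real on $\mathbb{R}$. The phase function $\varphi$ is a smooth real function on $\mathbb{R}$ with $E^{\#}(x)/E(x)=e^{i\varphi(x)}$. For $0<p<\infty$, $\mathcal{H}^p(E)$ is the space of entire $f$ with $f/E, f^{\#}/E$ in the Hardy space $H^p(\mathbb{C}_+)$, $\lVert f/E\rVert_p=(\int_{\mathbb{R}}\lvert f/E\rvert^p dx)^{1/p}$; $\mathcal{H}^\infty(E)$ is defined with bounded analytic functions and $\lVert f/E\rVert_\infty=\sup_{\mathbb{R}}\lvert f/E\rvert$. When $\varphi'\in L^\infty$, $\mathcal{H}^p(E)\subset\mathcal{H}^\infty(E)$ and $C(p,E)$ is the norm of this embedding. *)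

From mathcomp Require Import all_boot all_order all_algebra.
From mathcomp Require Import all_classical all_reals all_analysis.
From mathcomp Require Import complex.
Import Order.TTheory GRing.Theory Num.Theory.
Import numFieldNormedType.Exports.

Set Implicit Arguments.
Unset Strict Implicit.
Unset Printing Implicit Defensive.

Local Open Scope ring_scope.
Local Open Scope complex_scope.

Definition cabs (R : realType) (z : R[i]) : R := complex.Re `|z|.

Definition UHP (R : realType) : set R[i] := [set z | 0 < complex.Im z].

(* complex (C-)differentiability at a point *)
Definition cderivable (R : realType) (F : R[i] -> R[i]) (z : R[i]) : Prop :=
  derivable (F : R[i]^o -> R[i]^o) z 1.

Definition holomorphic_on (R : realType) (D : set R[i]) (F : R[i] -> R[i]) :=
  forall z, D z -> cderivable F z.

Definition entire (R : realType) (F : R[i] -> R[i]) := forall z, cderivable F z.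

Definition sharp (R : realType) (g : R[i] -> R[i]) : R[i] -> R[i] :=
  fun z => (g z^*)^*.

Definition real_entire (R : realType) (f : R[i] -> R[i]) :=
  entire f /\ forall x : R, complex.Im (f x%:C) = 0.

Definition Hermite_Biehler (R : realType) (E : R[i] -> R[i]) :=
  entire E /\ forall z : R[i], 0 < complex.Im z -> cabs (E z^*) < cabs (E z).

Definition phase_function (R : realType) (E : R[i] -> R[i]) (phi : R -> R) :=
  (forall (n : nat) (x : R), derivable (derive1n n phi) x 1) /\
  forall x : R, sharp E x%:C / E x%:C = (cos (phi x)) +i* (sin (phi x)).

Definition Hardy (R : realType) (p : R) (F : R[i] -> R[i]) :=
  holomorphic_on (@UHP R) F /\
  exists M : R, forall y : R, 0 < y ->
    (\int[lebesgue_measure]_(x in setT) ((cabs (F (x +i* y))) `^ p)%:E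
       <= M%:E)%E.

Definition Hardy_inf (R : realType) (F : R[i] -> R[i]) :=
  holomorphic_on (@UHP R) F /\
  exists M : R, forall z, UHP z -> cabs (F z) <= M.

Definition HpE (R : realType) (p : R) (E : R[i] -> R[i]) (f : R[i] -> R[i]) :=
  entire f /\ Hardy p (fun z => f z / E z) /\ Hardy p (fun z => sharp f z / E z).

Definition normp (R : realType) (p : R) (E f : R[i] -> R[i]) : \bar R :=
  Lnorm (@lebesgue_measure R) p%:E (fun x : R => (cabs (f x%:C / E x%:C))%:E).

Definition normsup (R : realType) (E f : R[i] -> R[i]) : \bar R :=
  ereal_sup [set (cabs (f x%:C / E x%:C))%:E | x in [set: R]].

Definition embedding_norm (R : realType) (p : R) (E : R[i] -> R[i]) : \bar R :=
  ereal_sup [set normsup E f | f in [set f | HpE p E f /\ (normp p E f <= 1)%E]].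

(* Let f be in H^p(E) and x real. Rotate f by a unimodular constant u with u f(x) = |f(x)|
   and put g = (uf + (uf)^#)/2, the entire function that coincides with Re(uf) on the real
   line. As (uf)^# = conj(u) f^#, g/E is a linear combination of f/E and f^#/E, so g lies in
   H^p(E); moreover g is real entire, |g| <= |f| on R, and g(x) = |f(x)|. Applying the
   hypothesis to g gives |f(x)/E(x)| <= C ||g/E||_p <= C ||f/E||_p. *)

From mathcomp Require Import all_boot all_order all_algebra.
From mathcomp Require Import all_classical all_reals all_analysis.
From mathcomp Require Import complex measurable_realfun.
Import Order.TTheory GRing.Theory Num.Theory.
Import numFieldNormedType.Exports.

Set Implicit Arguments.
Unset Strict Implicit.
Unset Printing Implicit Defensive.

Local Open Scope classical_set_scope.
Local Open Scope ring_scope.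
Local Open Scope complex_scope.

Section complex_modulus.
Variable R : realType.
Implicit Types (a b z : R[i]) (x : R).

Lemma cabsE z : `|z| = (cabs z)%:C.
Proof. by rewrite /cabs normc_def. Qed.

Lemma cabs_ge0 z : 0 <= cabs z.
Proof. by rewrite /cabs normc_def /= sqrtr_ge0. Qed.

Lemma cabsM a b : cabs (a * b) = cabs a * cabs b.
Proof. by apply: complexI; rewrite rmorphM /= -!cabsE normrM. Qed.

Lemma cabsV z : cabs z^-1 = (cabs z)^-1.
Proof. by apply: complexI; rewrite fmorphV /= -!cabsE normfV. Qed.

Lemma cabsR x : cabs x%:C = `|x|.
Proof. by rewrite /cabs normc_def /= expr0n /= addr0 sqrtr_sqr. Qed.

Lemma cabsJ z : cabs z^* = cabs z.
Proof. by apply: complexI; rewrite -!cabsE normcJ. Qed.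

Lemma cabsD a b : cabs (a + b) <= cabs a + cabs b.
Proof. by rewrite -lecR rmorphD /= -!cabsE ler_normD. Qed.

Lemma cabs_dist a b : `|cabs a - cabs b| <= cabs (a - b).
Proof. by rewrite -lecR -cabsR rmorphB /= -!cabsE ler_dist_dist. Qed.

Lemma cabs_Re_le z : `|complex.Re z| <= cabs z.
Proof. by rewrite -lecR -cabsE normc_ge_Re. Qed.

Lemma unimodular_rotation a : exists2 u : R[i], cabs u = 1 & u * a = (cabs a)%:C.
Proof.
have [->|a0] := eqVneq a 0.
  by exists 1; rewrite ?mulr0 -?cabsE ?normr0 // -[1]/(1%:C) cabsR normr1.
have ca0 : (cabs a)%:C != 0 by rewrite -cabsE normr_eq0.
exists (a^* / (cabs a)%:C).
  rewrite cabsM cabsV cabsJ cabsR ger0_norm ?cabs_ge0 // mulfV //.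
  by apply: contraNneq ca0 => ->.
by rewrite mulrAC -normCKC cabsE expr2 mulfK.
Qed.

End complex_modulus.

Section complex_continuity.
Variable R : realType.
Implicit Types (F G : R[i] -> R[i]) (z : R[i]).

Lemma continuous_conjc : continuous (conjc : R[i]^o -> R[i]^o).
Proof.
move=> z; apply/(@cvgrPdist_lt _ _ _ (nbhs (z : R[i]^o))) => e e0.
have := (@cvgrPdist_lt _ _ _ (nbhs (z : R[i]^o)) (nbhs_filter _) (@id R[i]^o) z).1.
move=> /(_ cvg_id e e0).
by apply: filterS => w /=; rewrite -rmorphB normcJ.
Qed.

Lemma conjc_dnbhs0 :
  (conjc : R[i]^o -> R[i]^o) @ (0 : R[i]^o)^' --> (0 : R[i]^o)^'.
Proof.
move=> A A0.
have {}A0 : nbhs (0 : R[i]^o) (fun w => w != 0 -> A w) by [].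
suff : nbhs (0 : R[i]^o) (fun h => h != 0 -> A h^*) by [].
have conj0 : (conjc : R[i]^o -> R[i]^o) @ (0 : R[i]^o) --> (0 : R[i]^o).
  by rewrite -[X in _ --> X]conjc0; exact: continuous_conjc.
have : nbhs (0 : R[i]^o) (fun h => h^* != 0 -> A h^*) := conj0 _ A0.
apply: filterS => h Ah h0; apply: Ah.
by rewrite conjc_eq0.
Qed.

Lemma sharp_cderivable F z : cderivable F z^* -> cderivable (sharp F) z.
Proof.
move=> /cvg_ex[l Fl]; apply/cvg_ex; exists l^*.
have := cvg_comp _ _ (cvg_comp _ _ conjc_dnbhs0 Fl) (@continuous_conjc l).
apply: cvg_trans; apply: near_eq_cvg; near=> h.
rewrite /sharp /= /GRing.scale /= !mulr1 rmorphM rmorphB fmorphV /=.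
by rewrite conjcK rmorphD.
Unshelve. all: by end_near. Qed.

Lemma entire_sharp F : entire F -> entire (sharp F).
Proof. by move=> eF z; apply: sharp_cderivable. Qed.

Lemma cderivable_lincomb (c1 c2 : R[i]) F G z : cderivable F z -> cderivable G z ->
  cderivable (fun w => c1 * F w + c2 * G w) z.
Proof. by move=> dF dG; exact: derivableD (derivableZ dF) (derivableZ dG). Qed.

Lemma cderivable_continuous F z :
  cderivable F z -> {for z, continuous (F : R[i]^o -> R[i]^o)}.
Proof. by move=> /derivable1_diffP/differentiable_continuous. Qed.

Lemma cvg_horizontal_line (x y : R) :
  (fun t : R => (t +i* y : R[i]^o)) @ x --> (x +i* y : R[i]^o).
Proof.
apply/cvgrPdist_lt => e; rewrite ltcE /= => /andP[/eqP eI eR].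
have xe := (@cvgrPdist_lt _ _ R (nbhs x) (nbhs_filter x) id x).1 cvg_id _ eR.
apply: filterS xe => t /= xt.
have -> : e = (complex.Re e)%:C by case: e eI {eR xt} => a b /= ->.
have -> : (x +i* y : R[i]^o) - (t +i* y) = (x - t)%:C.
  by apply/eqP; rewrite eq_complex /= subrr !eqxx.
by rewrite cabsE ltcR cabsR.
Qed.

Lemma continuous_cabs_line F (y : R) :
  (forall x : R, {for x +i* y, continuous (F : R[i]^o -> R[i]^o)}) ->
  continuous (fun x : R => cabs (F (x +i* y))).
Proof.
move=> cF x; apply/cvgrPdist_lt => e e0.
have e0' : (0 : R[i]^o) < e%:C by rewrite ltcR.
have Fe := (@cvgrPdist_lt _ _ _ _ (nbhs_filter (x +i* y : R[i]^o)) _ _).1 (cF x) _ e0'.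
have Fxe : nbhs x (fun t : R => `|F (x +i* y) - F (t +i* y)| < e%:C).
  exact: cvg_horizontal_line Fe.
apply: (filterS _ Fxe) => t /= Ft.
apply: le_lt_trans (cabs_dist _ _) _.
by rewrite -ltcR -cabsE.
Qed.

Lemma measurable_powR_cabs_line F (y p : R) :
  (forall x : R, {for x +i* y, continuous (F : R[i]^o -> R[i]^o)}) ->
  measurable_fun [set: R] (fun x : R => ((cabs (F (x +i* y)) `^ p)%:E : \bar R)).
Proof.
move=> cF; apply/measurable_EFinP.
apply: measurableT_comp (measurable_powR p) _.
by apply: continuous_measurable_fun; exact: continuous_cabs_line.
Qed.

End complex_continuity.

Section Hardy_space.
Variable R : realType.
Implicit Types (F G : R[i] -> R[i]) (A B : R[i]).

Lemma powR_cabs_lincomb_le (p : R) (c1 c2 : R[i]) A B : 0 <= p ->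
  cabs (c1 * A + c2 * B) `^ p <= (cabs c1 + cabs c2) `^ p * (cabs A `^ p + cabs B `^ p).
Proof.
move=> p0; set m := Num.max (cabs A) (cabs B).
have c0 := @cabs_ge0 R; have m0 : 0 <= m by rewrite le_max c0.
have lin : cabs (c1 * A + c2 * B) <= (cabs c1 + cabs c2) * m.
  apply: le_trans (cabsD _ _) _; rewrite !cabsM mulrDl.
  by apply: lerD; apply: ler_wpM2l; rewrite ?le_max ?lexx ?orbT.
apply: le_trans (ge0_ler_powR p0 _ _ lin) _; rewrite ?nnegrE ?mulr_ge0 ?addr_ge0 //.
rewrite powRM ?addr_ge0 //; apply: ler_wpM2l; first exact: powR_ge0.
by rewrite /m; case: (leP (cabs A) (cabs B)) => _; rewrite ?lerDr ?lerDl powR_ge0.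
Qed.

Lemma Hardy_lincomb (p : R) (c1 c2 : R[i]) F G : 0 <= p -> Hardy p F -> Hardy p G ->
  Hardy p (fun z => c1 * F z + c2 * G z).
Proof.
move=> p0 [hF [MF bF]] [hG [MG bG]].
split; first by move=> z Hz; apply: cderivable_lincomb; [exact: hF | exact: hG].
pose k := (cabs c1 + cabs c2) `^ p.
exists (k * (MF + MG)) => y y0.
have mline H : holomorphic_on (@UHP R) H ->
    measurable_fun [set: R] (fun x : R => ((cabs (H (x +i* y)) `^ p)%:E : \bar R)).
  by move=> hH; apply: measurable_powR_cabs_line => x; exact/cderivable_continuous/hH.
pose fF x := ((cabs (F (x +i* y)) `^ p)%:E : \bar R).
pose fG x := ((cabs (G (x +i* y)) `^ p)%:E : \bar R).
have fF0 x : (0 <= fF x)%E by rewrite lee_fin powR_ge0.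
have fG0 x : (0 <= fG x)%E by rewrite lee_fin powR_ge0.
have mFG : measurable_fun [set: R] (fun x => fF x + fG x)%E.
  by apply: emeasurable_funD; [exact: mline | exact: mline].
apply: (@le_trans _ _ (\int[lebesgue_measure]_(x in setT) (k%:E * (fF x + fG x)%E))%E).
  apply: ge0_le_integral => //.
  - by move=> x _; rewrite lee_fin powR_ge0.
  - apply: (mline (fun z => c1 * F z + c2 * G z)) => z Hz.
    exact: cderivable_lincomb (hF z Hz) (hG z Hz).
  - exact: measurable_funeM.
  - by move=> x _; rewrite -EFinD -EFinM lee_fin powR_cabs_lincomb_le.
rewrite ge0_integralZl_EFin ?powR_ge0 //; last by move=> x _; exact: adde_ge0.
rewrite ge0_integralD //; try exact: mline.
by rewrite EFinM EFinD lee_wpmul2l ?lee_fin ?powR_ge0 //; exact: leeD (bF y y0) (bG y y0).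
Qed.

End Hardy_space.

Lemma le_Lnorm (R : realType) d (T : measurableType d) (mu : {measure set T -> \bar R})
    (p : R) (f g : T -> R) :
  0 <= p -> measurable_fun [set: T] f -> measurable_fun [set: T] g ->
  (forall x, `|f x| <= `|g x|) ->
  (Lnorm mu p%:E (EFin \o f) <= Lnorm mu p%:E (EFin \o g))%E.
Proof.
move=> p0 mf mg fg; rewrite unlock /=.
have mpow (h : T -> R) : measurable_fun [set: T] h ->
    measurable_fun [set: T] (fun x => ((`|h x| `^ p)%:E : \bar R)).
  move=> mh; apply/measurable_EFinP; apply: measurableT_comp (measurable_powR p) _.
  exact: measurableT_comp (@normr_measurable R setT) mh.
apply: gt0_ler_poweR; rewrite ?invr_ge0 //.
- by rewrite in_itv /= leey andbT integral_ge0 // => x _; rewrite lee_fin powR_ge0.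
- by rewrite in_itv /= leey andbT integral_ge0 // => x _; rewrite lee_fin powR_ge0.
apply: ge0_le_integral => //.
- exact: mpow.
- exact: mpow.
- by move=> x _; rewrite lee_fin ge0_ler_powR ?nnegrE.
Qed.

Section real_part.
Variable R : realType.
Implicit Types (E f h : R[i] -> R[i]) (u : R[i]).

Definition re_sharp h : R[i] -> R[i] := fun z => (h z + sharp h z) / 2.

Lemma sharp_re_sharp h : sharp (re_sharp h) = re_sharp h.
Proof.
apply: funext => z.
have conjcD (v w : R[i]) : conjc (v + w) = conjc v + conjc w := rmorphD conjc v w.
have conjcM (v w : R[i]) : conjc (v * w) = conjc v * conjc w := rmorphM conjc v w.
have half_real : (2^-1 : R[i]) = (2^-1 : R)%:C by rewrite fmorphV rmorph_nat.
by rewrite /re_sharp /sharp conjcM conjcD !conjcK half_real conjc_real [_ + h z]addrC.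
Qed.

Lemma re_sharp_real h (x : R) : re_sharp h x%:C = (complex.Re (h x%:C))%:C.
Proof. by rewrite ReJ_add /re_sharp /sharp conjc_real. Qed.

Lemma sharp_scale u f : sharp (fun z => u * f z) = fun z => conjc u * sharp f z.
Proof. by apply: funext => z; rewrite /sharp rmorphM. Qed.

Lemma entire_scale u f : entire f -> entire (fun z => u * f z).
Proof. by move=> ef z; exact: derivableZ (ef z). Qed.

Lemma entire_re_sharp h : entire h -> entire (re_sharp h).
Proof.
move=> eh z.
have -> : re_sharp h = fun w => 2^-1 * h w + 2^-1 * sharp h w.
  by apply: funext => w; rewrite /re_sharp mulrDl !(mulrC _ 2^-1).
by apply: cderivable_lincomb; [exact: eh | exact: entire_sharp].
Qed.

Lemma real_entire_re_sharp h : entire h -> real_entire (re_sharp h).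
Proof. by move=> eh; split=> [|x]; [exact: entire_re_sharp | rewrite re_sharp_real]. Qed.

Lemma HpE_re_sharp_scale (p : R) E u f :
  0 <= p -> HpE p E f -> HpE p E (re_sharp (fun z => u * f z)).
Proof.
move=> p0 [ef [hf hsf]].
have gE : (fun z => re_sharp (fun w => u * f w) z / E z) =
    fun z => (u / 2) * (f z / E z) + (conjc u / 2) * (sharp f z / E z).
  apply: funext => z; rewrite /re_sharp sharp_scale.
  by rewrite !mulrDl !mulrA; congr (_ + _); congr (_ * _); exact: mulrAC.
split; first exact/entire_re_sharp/entire_scale.
by rewrite sharp_re_sharp gE; split; exact: Hardy_lincomb.
Qed.

Lemma normp_re_sharp_scale_le (p : R) E u f :
  0 <= p -> entire E -> (forall x : R, E x%:C != 0) -> entire f -> cabs u = 1 ->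
  (normp p E (re_sharp (fun z => (u * f z)%R)) <= normp p E f)%E.
Proof.
move=> p0 eE E0 ef u1.
have mquot h : entire h -> measurable_fun [set: R] (fun x : R => cabs (h x%:C / E x%:C)).
  move=> eh; apply: continuous_measurable_fun.
  apply: (@continuous_cabs_line _ (fun z => h z / E z) 0) => x.
  exact: cvgM (cderivable_continuous (eh _)) (cvgV (E0 x) (cderivable_continuous (eE _))).
set g := re_sharp _.
apply: (@le_Lnorm _ _ _ lebesgue_measure p (fun x => cabs (g x%:C / E x%:C))
  (fun x => cabs (f x%:C / E x%:C))) => //.
- apply: (mquot g); rewrite /g; apply: entire_re_sharp; exact: entire_scale.
- exact: mquot.
move=> x; rewrite !ger0_norm ?cabs_ge0 // /g re_sharp_real !cabsM cabsR.
by rewrite ler_wpM2r ?cabs_ge0 // -[cabs (f _)]mul1r -u1 -cabsM cabs_Re_le.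
Qed.

End real_part.

Theorem lemma5 (R : realType) (E : R[i] -> R[i]) (p C : R) :
  Hermite_Biehler E ->
  (forall x : R, E x%:C != 0) ->
  (exists phi : R -> R, phase_function E phi /\
     exists M : R, forall x : R, `|derive1 phi x| <= M) ->
  0 < p ->
  0 < C ->
  (forall f : R[i] -> R[i], real_entire f -> HpE p E f ->
     (normsup E f <= C%:E * normp p E f)%E) ->
  (embedding_norm p E <= C%:E)%E.
Proof.
move=> [eE _] E0 _ p0 C0 bound.
apply: ge_ereal_sup => _ [f [fHp fn] <-]; have [ef _] := fHp.
apply: ge_ereal_sup => _ [x _ <-].
have [u u1 ufx] := unimodular_rotation (f x%:C).
set g := re_sharp (fun z => (u * f z)%R).
have gx : cabs (g x%:C / E x%:C) = cabs (f x%:C / E x%:C).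
  by rewrite /g re_sharp_real ufx !cabsM cabsR ger0_norm ?cabs_ge0.
have greal : real_entire g := real_entire_re_sharp (entire_scale ef).
have gHp : HpE p E g := HpE_re_sharp_scale u (ltW p0) fHp.
have gn : (normp p E g <= 1)%E.
  exact: le_trans (normp_re_sharp_scale_le (ltW p0) eE E0 ef u1) fn.
rewrite -gx; apply: (@le_trans _ _ (normsup E g)).
  by apply: ereal_sup_ubound; exists x.
apply: le_trans (bound g greal gHp) _.
rewrite -[X in (_ <= X)%E]mule1; apply: lee_wpmul2l => //; exact: ltW.
Qed.
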